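(* For all proof keyed labels $\theta_1$, $\theta_2$: 1. If $\theta_1$ and $\theta_2$ are independent then $\theta_1$ and $\theta_2$ are connected. 2. If $\theta_1$ and $\theta_2$ are dependent then $\theta_1$ and $\theta_2$ are connected. 3. If $\theta_1$ and $\theta_2$ are connected then either $\theta_1$ and $\theta_2$ are independent or $\theta_1$ and $\theta_2$ are dependent, but not both.
   Context: Setting: CCSK (reversible CCS with communication keys) enriched with proof labels. Labels $\alpha$ range over names $a$, co-names $\overline{a}$ and $\tau$ ($\overline{\tau}=\tau$); $\lambda$ ranges over labels other than $\tau$; $k, m, n$ range over a denumerable set of keys. Let $d$ range over directions $L, R$, with $\overline{d}$ the opposite direction, and $\upsilon, \upsilon_1, \upsilon_2$ range over strings in $\{\mid_L, \mid_R, +_L, +_R\}^*$. Proof keyed labels are $\theta ::= \upsilon\,\alpha[k] \;|\; \upsilon\,\langle \upsilon_1 \lambda[k], \upsilon_2 \overline{\lambda}[k]\rangle$; the key of $\upsilon\alpha[k]$ and of $\upsilon\langle\upsilon_1\lambda[k],\upsilon_2\overline{\lambda}[k]\rangle$ is $k$. A label of the form $\alpha[k]$ (empty string $\upsilon$) is called a prefix. In a synchronisation label $\langle\theta_L,\theta_R\rangle$, $\theta_d$ denotes the component on side $d$. Three binary relations on proof keyed labels are defined as the relations derivable by the following rules. Connectivity ($\theta_1$ and $\theta_2$ are connected): A1: $\alpha[k]$ is connected to any $\theta$. A2: $\theta$ is connected to $\alpha[k]$ if $\theta$ is not a prefix. P1: $\mid_d\theta$ connected to $\mid_d\theta'$ if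 $\theta$ connected to $\theta'$. P2: $\mid_d\theta$ connected to $\mid_{\overline d}\theta'$ (always). C1: $+_d\theta$ connected to $+_d\theta'$ if $\theta$ connected to $\theta'$. C2: $+_d\theta$ connected to $+_{\overline d}\theta'$ (always). S1: $\mid_d\theta$ connected to $\langle\theta_L,\theta_R\rangle$ if $\theta$ connected to $\theta_d$. S2: $\langle\theta_L,\theta_R\rangle$ connected to $\mid_d\theta$ if $\theta_d$ connected to $\theta$. S3: $\langle\theta_1,\theta_2\rangle$ connected to $\langle\theta'_1,\theta'_2\rangle$ if $\theta_1$ connected to $\theta'_1$ and $\theta_2$ connected to $\theta'_2$. Dependence ($\theta_1$ and $\theta_2$ are dependent): A1: $\alpha[k]$ dependent on any $\theta$. A2: $\theta$ dependent on $\alpha[k]$ if $\theta$ is not a prefix. C1: $+_d\theta$ dependent on $+_d\theta'$ if $\theta$ dependent on $\theta'$. C2: $+_d\theta$ dependent on $+_{\overline d}\theta'$ (always). P1: $\mid_d\theta$ dependent on $\mid_d\theta'$ if $\theta$ dependent on $\theta'$. P2$_k$: $\mid_d\theta$ dependent on $\mid_{\overline d}\theta'$ if the key of $\theta$ equals the key of $\theta'$. S1: $\mid_d\theta$ dependent on $\langle\theta_L,\theta_R\rangle$ if $\theta$ dependent on $\theta_d$. S2: $\langle\theta_L,\theta_R\rangle$ dependent on $\mid_d\theta$ if $\theta_d$ dependent on $\theta$. S3: $\langle\theta_1,\theta_2\rangle$ dependent on $\langle\theta'_1,\theta'_2\rangle$ if, for some $i \neq j$ in $\{1,2\}$, $\theta_i$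 is dependent on $\theta'_i$ and $\theta_j$ is connected to $\theta'_j$. Independence ($\theta_1$ and $\theta_2$ are independent): no rule for prefixes. C1: $+_d\theta$ independent of $+_d\theta'$ if $\theta$ independent of $\theta'$ (no rule for $+_d$ vs $+_{\overline d}$). P1: $\mid_d\theta$ independent of $\mid_d\theta'$ if $\theta$ independent of $\theta'$. P2$_k$: $\mid_d\theta$ independent of $\mid_{\overline d}\theta'$ if the key of $\theta$ differs from the key of $\theta'$. S1: $\mid_d\theta$ independent of $\langle\theta_L,\theta_R\rangle$ if $\theta$ independent of $\theta_d$. S2: $\langle\theta_L,\theta_R\rangle$ independent of $\mid_d\theta$ if $\theta_d$ independent of $\theta$. S3: $\langle\theta_1,\theta_2\rangle$ independent of $\langle\theta'_1,\theta'_2\rangle$ if $\theta_1$ independent of $\theta'_1$ and $\theta_2$ independent of $\theta'_2$. *)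

From Stdlib Require Import List.
Import ListNotations.

Definition name := nat.
Definition key := nat.

Inductive vlabel : Type := Nm (a : name) | CoNm (a : name).

Definition vbar (l : vlabel) : vlabel :=
  match l with Nm a => CoNm a | CoNm a => Nm a end.

Inductive label : Type := Vis (l : vlabel) | Tau.

Inductive dir : Type := L | R.
Definition opp (d : dir) : dir := match d with L => R | R => L end.

Inductive pkl : Type :=
| Pre  (a : label) (k : key)
| Par  (d : dir) (t : pkl)
| Sum  (d : dir) (t : pkl)
| Sync (tL tR : pkl).

Inductive op : Type := OPar (d : dir) | OSum (d : dir).

(* wrap u t = upsilon t *)
Fixpoint wrap (u : list op) (t : pkl) : pkl :=
  match u with
  | [] => t
  | OPar d :: u' => Par d (wrap u' t)
  | OSum d :: u' => Sum d (wrap u' t)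
  end.

(* Well-formedness: the grammar
   theta ::= upsilon alpha[k] | upsilon <upsilon1 lambda[k], upsilon2 \bar lambda[k]>. *)
Fixpoint wf (t : pkl) : Prop :=
  match t with
  | Pre _ _ => True
  | Par _ t' => wf t'
  | Sum _ t' => wf t'
  | Sync tL tR => exists (u1 u2 : list op) (l : vlabel) (k : key),
      tL = wrap u1 (Pre (Vis l) k) /\ tR = wrap u2 (Pre (Vis (vbar l)) k)
  end.

Fixpoint keyof (t : pkl) : key :=
  match t with
  | Pre _ k => k
  | Par _ t' => keyof t'
  | Sum _ t' => keyof t'
  | Sync tL _ => keyof tL
  end.

Definition is_prefix (t : pkl) : Prop :=
  match t with Pre _ _ => True | _ => False end.

Definition side (d : dir) (tL tR : pkl) : pkl :=
  match d with L => tL | R => tR end.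

Inductive connected : pkl -> pkl -> Prop :=
| con_A1 : forall a k t, connected (Pre a k) t
| con_A2 : forall t a k, ~ is_prefix t -> connected t (Pre a k)
| con_P1 : forall d t t', connected t t' -> connected (Par d t) (Par d t')
| con_P2 : forall d t t', connected (Par d t) (Par (opp d) t')
| con_C1 : forall d t t', connected t t' -> connected (Sum d t) (Sum d t')
| con_C2 : forall d t t', connected (Sum d t) (Sum (opp d) t')
| con_S1 : forall d t tL tR, connected t (side d tL tR) ->
    connected (Par d t) (Sync tL tR)
| con_S2 : forall d t tL tR, connected (side d tL tR) t ->
    connected (Sync tL tR) (Par d t)
| con_S3 : forall t1 t2 t1' t2', connected t1 t1' -> connected t2 t2' ->
    connected (Sync t1 t2) (Sync t1' t2').

Inductive dependent : pkl -> pkl -> Prop :=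
| dep_A1 : forall a k t, dependent (Pre a k) t
| dep_A2 : forall t a k, ~ is_prefix t -> dependent t (Pre a k)
| dep_C1 : forall d t t', dependent t t' -> dependent (Sum d t) (Sum d t')
| dep_C2 : forall d t t', dependent (Sum d t) (Sum (opp d) t')
| dep_P1 : forall d t t', dependent t t' -> dependent (Par d t) (Par d t')
| dep_P2k : forall d t t', keyof t = keyof t' ->
    dependent (Par d t) (Par (opp d) t')
| dep_S1 : forall d t tL tR, dependent t (side d tL tR) ->
    dependent (Par d t) (Sync tL tR)
| dep_S2 : forall d t tL tR, dependent (side d tL tR) t ->
    dependent (Sync tL tR) (Par d t)
(* S3 with (i,j) = (1,2) and (i,j) = (2,1) *)
| dep_S3_12 : forall t1 t2 t1' t2', dependent t1 t1' -> connected t2 t2' ->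
    dependent (Sync t1 t2) (Sync t1' t2')
| dep_S3_21 : forall t1 t2 t1' t2', dependent t2 t2' -> connected t1 t1' ->
    dependent (Sync t1 t2) (Sync t1' t2').

Inductive independent : pkl -> pkl -> Prop :=
| ind_C1 : forall d t t', independent t t' -> independent (Sum d t) (Sum d t')
| ind_P1 : forall d t t', independent t t' -> independent (Par d t) (Par d t')
| ind_P2k : forall d t t', keyof t <> keyof t' ->
    independent (Par d t) (Par (opp d) t')
| ind_S1 : forall d t tL tR, independent t (side d tL tR) ->
    independent (Par d t) (Sync tL tR)
| ind_S2 : forall d t tL tR, independent (side d tL tR) t ->
    independent (Sync tL tR) (Par d t)
| ind_S3 : forall t1 t2 t1' t2', independent t1 t1' -> independent t2 t2' ->
    independent (Sync t1 t2) (Sync t1' t2').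

(* Each of the three relations is defined by rules that descend through the
   two labels in lockstep, and every rule for independence or dependence has
   a counterpart for connectivity with weaker premises; this gives 1 and 2 by
   rule induction.  For 3, induction on connectivity shows that the premise of
   each connectivity rule splits into the premise of an independence or of a
   dependence rule (the only genuine case split is P2, on equality of keys),
   and induction on independence shows that no pair satisfies both: the rules
   that could overlap disagree on the direction, on the keys, or on a
   component where the induction hypothesis applies. *)

From Stdlib Require Import Arith.

Lemma independent_connected (t1 t2 : pkl) :
  independent t1 t2 -> connected t1 t2.
Proof. induction 1; constructor; assumption. Qed.

Lemma dependent_connected (t1 t2 : pkl) :
  dependent t1 t2 -> connected t1 t2.
Proof. induction 1; constructor; assumption. Qed.

Lemma connected_independent_or_dependent (t1 t2 : pkl) :
  connected t1 t2 -> independent t1 t2 \/ dependent t1 t2.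
Proof.
  induction 1 as [| | d t t' _ [Hi | Hd] | d t t' | d t t' _ [Hi | Hd] | d t t'
                  | d t tL tR _ [Hi | Hd] | d t tL tR _ [Hi | Hd]
                  | t1 t2 t1' t2' Hc1 [Hi1 | Hd1] Hc2 [Hi2 | Hd2]].
  all: try (left; constructor; assumption).
  all: try (right; constructor; assumption).
  destruct (Nat.eq_dec (keyof t) (keyof t')).
  - right; apply dep_P2k; assumption.
  - left; apply ind_P2k; assumption.
Qed.

Lemma independent_not_dependent (t1 t2 : pkl) :
  independent t1 t2 -> ~ dependent t1 t2.
Proof.
  induction 1; intro Hd; inversion Hd; subst; eauto; destruct d; discriminate.
Qed.

Theorem theorem4p6 (t1 t2 : pkl) (wf1 : wf t1) (wf2 : wf t2) :
  (independent t1 t2 -> connected t1 t2) /\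
  (dependent t1 t2 -> connected t1 t2) /\
  (connected t1 t2 ->
     (independent t1 t2 \/ dependent t1 t2) /\
     ~ (independent t1 t2 /\ dependent t1 t2)).
Proof.
  split; [apply independent_connected |].
  split; [apply dependent_connected |].
  intro Hc; split.
  - apply connected_independent_or_dependent; assumption.
  - intros [Hi Hd]; exact (independent_not_dependent _ _ Hi Hd).
Qed.
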